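(* Let $\mathcal{E}$ be a sufficiently cocomplete category, let $\phi:\mathbb{S}\to\mathbb{R}$ be a morphism of generalized Reedy categories and let $k\in\mathbb{N}$. Suppose that the commutative square formed by $\phi^+_k:\mathbb{S}^+((k))\to\mathbb{R}^+((k))$, $\phi_k:\mathbb{G}_k(\mathbb{S})\to\mathbb{G}_k(\mathbb{R})$ and the two codomain functors $\mathbb{S}^+((k))\to\mathbb{G}_k(\mathbb{S})$, $\mathbb{R}^+((k))\to\mathbb{G}_k(\mathbb{R})$ is a pullback of categories. Then for each object $X$ of $\mathcal{E}^{\mathbb{R}}$ the natural comparison map $L_k(\phi^*(X))\to\phi_k^*(L_k(X))$ is an isomorphism. Moreover, this pullback hypothesis holds in the following two cases: (i) $\mathbb{S}=\mathbb{R}^+(n)$ and $\phi:\mathbb{R}^+(n)\to\mathbb{R}$ is the domain functor; (ii) $\mathbb{S}=\mathbb{R}_{\leq n}$ and $\phi:\mathbb{R}_{\leq n}\to\mathbb{R}$ is the canonical embedding.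
   Context: A generalized Reedy category is a small category $\mathbb{R}$ with wide subcategories $\mathbb{R}^+,\mathbb{R}^-$ and degree $d:\mathrm{Ob}(\mathbb{R})\to\mathbb{N}$ such that (i) non-invertible morphisms of $\mathbb{R}^+$ (resp. $\mathbb{R}^-$) strictly raise (resp. lower) degree and isomorphisms preserve degree; (ii) $\mathbb{R}^+\cap\mathbb{R}^-=\mathrm{Iso}(\mathbb{R})$; (iii) every morphism factors as $gh$ with $g\in\mathbb{R}^+$, $h\in\mathbb{R}^-$, uniquely up to isomorphism; (iv) if $\theta f=f$ with $\theta$ an isomorphism and $f\in\mathbb{R}^-$ then $\theta$ is an identity. A morphism of generalized Reedy categories is a functor preserving $(-)^+,(-)^-$ and degree. Notation: $\mathbb{G}_k(\mathbb{R})$ is the groupoid of objects of degree $k$ and isomorphisms between them; $\mathbb{R}_{\leq n}$ is the full subcategory of objects of degree $\le n$ with the restricted generalized Reedy structure. $\mathbb{R}^+((k))$ has objects the non-invertible morphisms $u:s\to r$ of $\mathbb{R}^+$ with $d(r)=k$, and morphisms from $u$ to $u':s'\to r'$ the commutative squares $gu=u'f$ with $f:s\to s'$ in $\mathbb{R}^+$ and $g:r\to r'$ in $\mathbb{G}_k(\mathbb{R})$; let $c_k:\mathbb{R}^+((k))\to\mathbb{G}_k(\mathbb{R})$ and $d_k:\mathbb{R}^+((k))\to\mathbb{R}$ be the codomain and domain functors. For $X\in\mathcal{E}^{\mathbb{R}}$, $L_k(X)=(c_k)_!d_k^*(X)\in\mathcal{E}^{\mathbb{G}_k(\mathbb{R})}$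 (left Kan extension along $c_k$); concretely $L_k(X)_r=\mathrm{colim}_{(u:s\to r)}X_s$ over non-invertible $u\in\mathbb{R}^+$ into $r$. A morphism $\phi$ of generalized Reedy categories induces functors $\phi_k:\mathbb{G}_k(\mathbb{S})\to\mathbb{G}_k(\mathbb{R})$ and $\phi_k^+:\mathbb{S}^+((k))\to\mathbb{R}^+((k))$, and a natural map $L_k(\phi^*X)\to\phi_k^*(L_k X)$, where $\phi^*$ and $\phi_k^*$ are precomposition. $\mathbb{R}^+(n)$ is the category with objects the non-invertible $u:s\to r$ in $\mathbb{R}^+$ with $d(r)=n$, and morphisms from $u:s\to r$ to $u':s'\to r$ the $w:s\to s'$ with $u=u'w$; it is a generalized Reedy category with degree of $u:s\to r$ equal to $d(s)$, all morphisms in $\mathbb{R}^+(n)^+$, and $\mathbb{R}^+(n)^-$ consisting of the isomorphisms; the domain functor $u\mapsto s$ is a morphism of generalized Reedy categories. *)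

From Stdlib Require Import ProofIrrelevance Arith.
Set Implicit Arguments.
Unset Strict Implicit.

Record Cat := mkCat {
  Ob :> Type;
  Hom : Ob -> Ob -> Type;
  idm : forall a, Hom a a;
  comp : forall a b c, Hom b c -> Hom a b -> Hom a c; (* comp g f = g o f *)
  comp_idl : forall a b (f : Hom a b), comp (idm b) f = f;
  comp_idr : forall a b (f : Hom a b), comp f (idm a) = f;
  comp_assoc : forall a b c d (h : Hom c d) (g : Hom b c) (f : Hom a b),
      comp h (comp g f) = comp (comp h g) f }.
Arguments Hom {c0} _ _.
Arguments idm {c0} a.
Arguments comp {c0 a b c} _ _.

Definition is_iso {C : Cat} {a b : C} (f : Hom a b) : Prop :=
  exists g : Hom b a, comp g f = idm a /\ comp f g = idm b.

Record Functor (C D : Cat) := mkFunctor {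
  Fobj :> C -> D;
  Fmor : forall a b : C, Hom a b -> Hom (Fobj a) (Fobj b);
  F_id : forall a, Fmor (idm a) = idm (Fobj a);
  F_comp : forall a b c (g : Hom b c) (f : Hom a b),
      Fmor (comp g f) = comp (Fmor g) (Fmor f) }.
Arguments Fobj {C D} f0 _.
Arguments Fmor {C D} f0 {a b} _.

Definition precomp {C D E : Cat} (phi : Functor C D) (X : Functor D E) : Functor C E.
Proof.
  refine (@mkFunctor C E (fun a => Fobj X (Fobj phi a))
            (fun a b f => Fmor X (Fmor phi f)) _ _).
  - intro a; rewrite F_id, F_id; reflexivity.
  - intros a b c g f; rewrite F_comp, F_comp; reflexivity.
Defined.

(* A diagram in E indexed by (the underlying graph of) a small category.
   Colimits of a functor only depend on the underlying graph of the domain. *)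
Record Diagram (E : Cat) := mkDiagram {
  dI : Type;
  dA : dI -> dI -> Type;
  dD : dI -> Ob E;
  dM : forall i j, dA i j -> Hom (dD i) (dD j) }.
Arguments dI {E} d.
Arguments dA {E} d _ _.
Arguments dD {E} d _.
Arguments dM {E} d {i j} _.

Definition is_cocone {E : Cat} (D : Diagram E) (L : E) (lam : forall i, Hom (dD D i) L) : Prop :=
  forall i j (e : dA D i j), comp (lam j) (dM D e) = lam i.
Arguments is_cocone {E} D L lam.

Definition is_colimit {E : Cat} (D : Diagram E) (L : E) (lam : forall i, Hom (dD D i) L) : Prop :=
  is_cocone D L lam /\
  forall (M : E) (mu : forall i, Hom (dD D i) M), is_cocone D M mu ->
    exists! m : Hom L M, forall i, comp m (lam i) = mu i.
Arguments is_colimit {E} D L lam.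

Record PreReedy := mkPreReedy {
  rcat :> Cat;
  plus : forall a b : rcat, Hom a b -> Prop;
  minus : forall a b : rcat, Hom a b -> Prop;
  deg : rcat -> nat }.
Arguments plus {p a b} _.
Arguments minus {p a b} _.
Arguments deg {p} _.

Definition is_GReedy (R : PreReedy) : Prop :=
  (forall a : R, plus (idm a)) /\
  (forall (a b c : R) (g : Hom b c) (f : Hom a b), plus g -> plus f -> plus (comp g f)) /\
  (forall a : R, minus (idm a)) /\
  (forall (a b c : R) (g : Hom b c) (f : Hom a b), minus g -> minus f -> minus (comp g f)) /\
  (forall (a b : R) (f : Hom a b), plus f -> ~ is_iso f -> deg a < deg b) /\
  (forall (a b : R) (f : Hom a b), minus f -> ~ is_iso f -> deg b < deg a) /\
  (forall (a b : R) (f : Hom a b), is_iso f -> deg a = deg b) /\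
  (forall (a b : R) (f : Hom a b), (plus f /\ minus f) <-> is_iso f) /\
  (forall (a b : R) (f : Hom a b),
      exists (c : R) (h : Hom a c) (g : Hom c b), plus g /\ minus h /\ f = comp g h) /\
  (forall (a b : R) (f : Hom a b) (c : R) (h : Hom a c) (g : Hom c b)
          (c' : R) (h' : Hom a c') (g' : Hom c' b),
      plus g -> minus h -> f = comp g h -> plus g' -> minus h' -> f = comp g' h' ->
      exists t : Hom c c', is_iso t /\ comp t h = h' /\ comp g' t = g) /\
  (forall (a b : R) (f : Hom a b) (t : Hom b b),
      is_iso t -> minus f -> comp t f = f -> t = idm b).

Definition is_GMor {S R : PreReedy} (phi : Functor S R) : Prop :=
  (forall (a b : S) (f : Hom a b), plus f -> plus (Fmor phi f)) /\
  (forall (a b : S) (f : Hom a b), minus f -> minus (Fmor phi f)) /\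
  (forall a : S, deg (Fobj phi a) = deg a).

Lemma is_iso_Fmor {C D : Cat} (F : Functor C D) (a b : C) (f : Hom a b) :
  is_iso f -> is_iso (Fmor F f).
Proof.
  intros [g [H1 H2]]; exists (Fmor F g); split;
  rewrite <- F_comp, <- F_id; f_equal; assumption.
Qed.

(* objects of the indexing category of L_k(X)_r : non-invertible u : s -> r in R^+ *)
Definition FibObj (R : PreReedy) (r : R) : Type :=
  {s : R & {u : Hom s r | plus u /\ ~ is_iso u}}.
Arguments FibObj : clear implicits.

Definition Lk_diag {R : PreReedy} {E : Cat} (X : Functor R E) (r : R) : Diagram E :=
  {| dI := FibObj R r;
     dA := fun a b => {w : Hom (projT1 a) (projT1 b) |
                         plus w /\ proj1_sig (projT2 a) = comp (proj1_sig (projT2 b)) w};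
     dD := fun a => Fobj X (projT1 a);
     dM := fun a b w => Fmor X (proj1_sig w) |}.

Lemma GMor_plus_noniso {S R : PreReedy} (hS : is_GReedy S) (hR : is_GReedy R)
  (phi : Functor S R) (hphi : is_GMor phi) (s' s : S) (v : Hom s' s) :
  plus v /\ ~ is_iso v -> plus (Fmor phi v) /\ ~ is_iso (Fmor phi v).
Proof.
  intros [pv nv].
  destruct hS as [_ [_ [_ [_ [hSdeg _]]]]].
  destruct hR as [_ [_ [_ [_ [_ [_ [hRiso _]]]]]]].
  destruct hphi as [hp [_ hd]].
  split; [now apply hp|].
  intro Hi. apply hRiso in Hi. rewrite !hd in Hi.
  pose proof (hSdeg _ _ v pv nv). rewrite Hi in H. exact (Nat.lt_irrefl _ H).
Qed.

Definition fib_map {S R : PreReedy} (hS : is_GReedy S) (hR : is_GReedy R)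
  (phi : Functor S R) (hphi : is_GMor phi) (s : S) (a : FibObj S s)
  : FibObj R (Fobj phi s) :=
  existT _ (Fobj phi (projT1 a))
    (exist _ (Fmor phi (proj1_sig (projT2 a)))
       (GMor_plus_noniso hS hR hphi (proj2_sig (projT2 a)))).

(* objects of R^+((k)) (and also of R^+(k)): non-invertible u : s -> r in R^+ with d(r) = k *)
Record PlusObj (R : PreReedy) (k : nat) := mkPlusObj {
  pdom : R;
  pcod : R;
  parr : Hom pdom pcod;
  pplus : plus parr;
  pniso : ~ is_iso parr;
  pdeg : deg pcod = k }.
Arguments pdom {R k} _.
Arguments pcod {R k} _.
Arguments parr {R k} _.

(* The square  S^+((k)) --phi^+_k--> R^+((k)),  codomain functors to G_k,
   G_k(S) --phi_k--> G_k(R)  is a (strict) pullback of categories: the canonical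
   comparison functor from S^+((k)) to the strict pullback is bijective on
   objects and on morphisms (written out on the underlying data). *)
Definition pullback_cond {S R : PreReedy} (phi : Functor S R) (k : nat) : Prop :=
  (forall (a : PlusObj R k) (b : S), deg b = k -> pcod a = Fobj phi b ->
     exists! x : PlusObj S k,
       pcod x = b /\
       existT (fun p : R * R => Hom (fst p) (snd p))
              (Fobj phi (pdom x), Fobj phi (pcod x)) (Fmor phi (parr x))
       = existT (fun p : R * R => Hom (fst p) (snd p)) (pdom a, pcod a) (parr a)) /\
  (forall (x y : PlusObj S k)
          (f : Hom (Fobj phi (pdom x)) (Fobj phi (pdom y)))
          (g : Hom (Fobj phi (pcod x)) (Fobj phi (pcod y)))
          (g0 : Hom (pcod x) (pcod y)),
     (* (f,g) is a morphism phi^+ x -> phi^+ y of R^+((k)) *)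
     plus f -> is_iso g -> comp g (Fmor phi (parr x)) = comp (Fmor phi (parr y)) f ->
     (* g0 is a morphism of G_k(S), with  c_k(f,g) = phi_k(g0) *)
     is_iso g0 -> g = Fmor phi g0 ->
     exists! fg : Hom (pdom x) (pdom y) * Hom (pcod x) (pcod y),
       plus (fst fg) /\ is_iso (snd fg) /\ comp (snd fg) (parr x) = comp (parr y) (fst fg) /\
       Fmor phi (fst fg) = f /\ Fmor phi (snd fg) = g /\ snd fg = g0).

Lemma sig_ext {A : Type} {P : A -> Prop} (x y : sig P) :
  proj1_sig x = proj1_sig y -> x = y.
Proof.
  destruct x as [x px], y as [y py]; simpl; intros ->; f_equal; apply proof_irrelevance.
Qed.

(* morphisms u -> u' of R^+(n): w : s -> s' with u = u' w (same codomain) *)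
Definition PlusN_Hom (R : PreReedy) (n : nat) (a b : PlusObj R n) : Type :=
  {w : Hom (pdom a) (pdom b) |
     existT (fun c => Hom (pdom a) c) (pcod a) (parr a)
     = existT (fun c => Hom (pdom a) c) (pcod b) (comp (parr b) w)}.

Definition PlusN_id (R : PreReedy) (n : nat) (a : PlusObj R n) : PlusN_Hom a a.
Proof.
  exists (idm (pdom a)). rewrite comp_idr. reflexivity.
Defined.

Definition PlusN_comp (R : PreReedy) (n : nat) (a b c : PlusObj R n)
  (w' : PlusN_Hom b c) (w : PlusN_Hom a b) : PlusN_Hom a c.
Proof.
  exists (comp (proj1_sig w') (proj1_sig w)).
  destruct w' as [w' e2], w as [w e1]; simpl.
  pose (F := fun p : {c : R & Hom (pdom b) c} =>
               existT (fun c => Hom (pdom a) c) (projT1 p) (comp (projT2 p) w)).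
  apply (f_equal F) in e2. unfold F in e2; simpl in e2.
  rewrite e1, e2, comp_assoc. reflexivity.
Defined.

Definition PlusN_cat (R : PreReedy) (n : nat) : Cat.
Proof.
  refine (@mkCat (PlusObj R n) (@PlusN_Hom R n) (@PlusN_id R n) (@PlusN_comp R n) _ _ _).
  - intros a b f; apply sig_ext; simpl; apply comp_idl.
  - intros a b f; apply sig_ext; simpl; apply comp_idr.
  - intros a b c d h g f; apply sig_ext; simpl; apply comp_assoc.
Defined.

Definition PlusN (R : PreReedy) (n : nat) : PreReedy :=
  {| rcat := PlusN_cat R n;
     plus := fun a b f => True;
     minus := fun a b f => is_iso f;
     deg := fun a => deg (pdom a) |}.

Definition dom_functor (R : PreReedy) (n : nat) : Functor (PlusN R n) R.
Proof.
  refine (@mkFunctor (PlusN R n) R (fun a => pdom a) (fun a b w => proj1_sig w) _ _);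
  reflexivity.
Defined.

Definition Le_cat (R : PreReedy) (n : nat) : Cat.
Proof.
  refine (@mkCat {r : R | deg r <= n}
            (fun a b => Hom (proj1_sig a) (proj1_sig b))
            (fun a => idm (proj1_sig a))
            (fun a b c g f => comp g f) _ _ _).
  - intros; apply comp_idl.
  - intros; apply comp_idr.
  - intros; apply comp_assoc.
Defined.

Definition LeN (R : PreReedy) (n : nat) : PreReedy :=
  {| rcat := Le_cat R n;
     plus := fun a b (f : Hom (proj1_sig a) (proj1_sig b)) => plus f;
     minus := fun a b (f : Hom (proj1_sig a) (proj1_sig b)) => minus f;
     deg := fun a => deg (proj1_sig a) |}.

Definition incl_functor (R : PreReedy) (n : nat) : Functor (LeN R n) R.
Proof.
  refine (@mkFunctor (LeN R n) R (fun a => proj1_sig a) (fun a b f => f) _ _);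
  reflexivity.
Defined.

(* The pullback condition, read at an object s of degree k, says precisely that
   phi^+ maps the indexing category of L_k(phi^* X)_s (non-invertible u : s' -> s
   in S^+) bijectively on objects and surjectively on arrows onto the indexing
   category of L_k(X)_(phi s); the diagrams agree along this reindexing, so cocones
   on the two diagrams correspond and the comparison map of colimits is invertible.
   For R^+(n) the preimage of u : s' -> dom b is the morphism u from b o u to b;
   for R_(<= n) it is u itself, since d(s') < d(s) <= n. *)

From Stdlib Require Import ProofIrrelevance IndefiniteDescription Lia.

Lemma is_iso_idm {C : Cat} (a : C) : is_iso (idm a).
Proof. exists (idm a); split; apply comp_idl. Qed.

Lemma arrow_eq_dom {C : Cat} {a a' b b' : C} {f : Hom a b} {f' : Hom a' b'} :
  existT (fun p : C * C => Hom (fst p) (snd p)) (a, b) f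
  = existT (fun p : C * C => Hom (fst p) (snd p)) (a', b') f' -> a = a'.
Proof. exact (f_equal (fun x => fst (projT1 x)) (x:=_) (y:=_)). Qed.

Lemma plus_obj_ext {R : PreReedy} {k : nat} (x y : PlusObj R k) :
  existT (fun p : R * R => Hom (fst p) (snd p)) (pdom x, pcod x) (parr x)
  = existT (fun p : R * R => Hom (fst p) (snd p)) (pdom y, pcod y) (parr y) -> x = y.
Proof.
  destruct x as [a b f pf nf df], y as [a' b' f' pf' nf' df']; cbn; intro H.
  destruct (arrow_eq_dom H).
  assert (b = b') as <- by exact (f_equal (fun x => snd (projT1 x)) H).
  apply inj_pair2 in H; subst f'.
  f_equal; apply proof_irrelevance.
Qed.

Lemma cod_arrow_eq_comp {C : Cat} {a b x x' : C} {f : Hom b x} {f' : Hom b x'}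
  (h : Hom a b) :
  existT (fun c => Hom b c) x f = existT (fun c => Hom b c) x' f' ->
  existT (fun c => Hom a c) x (comp f h) = existT (fun c => Hom a c) x' (comp f' h).
Proof. exact (f_equal (fun p => existT _ (projT1 p) (comp (projT2 p) h)) (x:=_) (y:=_)). Qed.

Lemma plus_noniso_comp {R : PreReedy} (hR : is_GReedy R) {a b c : R}
  {g : Hom b c} {f : Hom a b} :
  plus g -> ~ is_iso g -> plus f -> ~ is_iso f ->
  plus (comp g f) /\ ~ is_iso (comp g f).
Proof.
  destruct hR as [_ [pcomp [_ [_ [hdeg [_ [hiso _]]]]]]].
  intros pg ng pf nf; split; [now apply pcomp|].
  intro Hi; apply hiso in Hi.
  pose proof (hdeg _ _ f pf nf); pose proof (hdeg _ _ g pg ng); lia.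
Qed.

Lemma colimit_endo_idm {E : Cat} {D : Diagram E} {L : E} {lam : forall i, Hom (dD D i) L}
  (h : Hom L L) :
  is_colimit D L lam -> (forall i, comp h (lam i) = lam i) -> h = idm L.
Proof.
  intros [colam ulam] Hh.
  destruct (ulam L lam colam) as [u [_ Hu]].
  transitivity u; [symmetry|]; apply Hu; [exact Hh|].
  intro i; apply comp_idl.
Qed.

Section Reindexing.
Context {E : Cat} {D : Diagram E} {I : Type} {A : I -> I -> Type} {F : I -> dI D}
  {M : forall i j, A i j -> dA D (F i) (F j)}.

Definition reindex : Diagram E :=
  {| dI := I; dA := A; dD := fun i => dD D (F i); dM := fun i j a => dM D (@M i j a) |}.

Hypotheses (F_inj : forall i1 i2, F i1 = F i2 -> i1 = i2)
  (F_surj : forall j, exists i, F i = j)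
  (M_surj : forall i j (e : dA D (F i) (F j)), exists a : A i j, M i j a = e).

Definition descend {L : E} (mu : forall i, Hom (dD D (F i)) L) (j : dI D) : Hom (dD D j) L :=
  let (i, Hi) := constructive_indefinite_description _ (F_surj j) in
  match Hi in _ = j' return Hom (dD D j') L with eq_refl => mu i end.

Lemma descend_image {L : E} (mu : forall i, Hom (dD D (F i)) L) (i : I) :
  descend mu (F i) = mu i.
Proof.
  unfold descend; destruct constructive_indefinite_description as [i' Hi'].
  assert (i' = i) as -> by exact (F_inj _ _ Hi').
  now rewrite (proof_irrelevance _ Hi' eq_refl).
Qed.

Lemma descend_cocone {L : E} (mu : forall i, Hom (dD D (F i)) L) :
  is_cocone reindex L mu -> is_cocone D L (descend mu).
Proof.
  intros Hmu j j'.
  destruct (F_surj j) as [i <-], (F_surj j') as [i' <-]; intro e.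
  rewrite !descend_image.
  destruct (M_surj _ _ e) as [a <-].
  exact (Hmu i i' a).
Qed.

Lemma colimit_reindex_iso {LS : E} {lamS : forall i, Hom (dD D (F i)) LS}
  {LR : E} {lamR : forall j, Hom (dD D j) LR} {m : Hom LS LR} :
  is_colimit reindex LS lamS -> is_colimit D LR lamR ->
  (forall i, comp m (lamS i) = lamR (F i)) -> is_iso m.
Proof.
  intros HS HR Hm.
  destruct (proj2 HR LS (descend lamS) (descend_cocone lamS (proj1 HS))) as [n [Hn _]].
  exists n; split.
  - apply (colimit_endo_idm _ HS); intro i.
    rewrite <- comp_assoc; cbn; now rewrite Hm, Hn, descend_image.
  - apply (colimit_endo_idm _ HR); intro j.
    destruct (F_surj j) as [i <-].
    now rewrite <- comp_assoc, Hn, descend_image.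
Qed.
End Reindexing.

Section FibreBijection.
Context {S R : PreReedy} {hS : is_GReedy S} {hR : is_GReedy R}
  {phi : Functor S R} {hphi : is_GMor phi} {k : nat} (Hpb : pullback_cond phi k)
  {s : S} (hs : deg s = k).

Local Notation phi_plus := (@fib_map S R hS hR phi hphi s).

Lemma deg_Fobj_s : deg (Fobj phi s) = k.
Proof. destruct hphi as [_ [_ hd]]; now rewrite hd. Qed.

Lemma fib_map_surjective (j : FibObj R (Fobj phi s)) : exists i, phi_plus i = j.
Proof.
  destruct j as [r [u [pu nu]]].
  destruct (proj1 Hpb (mkPlusObj pu nu deg_Fobj_s) s hs eq_refl)
    as [[s1 c1 v1 pv1 nv1 dv1] [[Hc Hv] _]]; cbn in Hc, Hv; subst c1.
  exists (existT _ s1 (exist _ v1 (conj pv1 nv1))).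
  destruct (arrow_eq_dom Hv); apply inj_pair2 in Hv; subst u.
  unfold fib_map; cbn; f_equal; now apply sig_ext.
Qed.

Lemma fib_map_injective (i1 i2 : FibObj S s) : phi_plus i1 = phi_plus i2 -> i1 = i2.
Proof.
  destruct i1 as [s1 [v1 [p1 n1]]], i2 as [s2 [v2 [p2 n2]]]; intro Heq.
  destruct (GMor_plus_noniso hS hR hphi (conj p1 n1)) as [pu nu].
  destruct (proj1 Hpb (mkPlusObj pu nu deg_Fobj_s) s hs eq_refl) as [x [_ Hx]].
  pose proof (Hx (mkPlusObj p1 n1 hs) (conj eq_refl eq_refl)) as E1.
  apply (f_equal (fun j : FibObj R (Fobj phi s) =>
     existT (fun p : R * R => Hom (fst p) (snd p))
            (projT1 j, Fobj phi s) (proj1_sig (projT2 j)))) in Heq.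
  pose proof (Hx (mkPlusObj p2 n2 hs) (conj eq_refl (eq_sym Heq))) as E2.
  rewrite E1 in E2.
  apply (f_equal (fun x : PlusObj S k =>
     existT (fun p : S * S => Hom (fst p) (snd p)) (pdom x, pcod x) (parr x))) in E2.
  cbn in E2; destruct (arrow_eq_dom E2); apply inj_pair2 in E2; subst v2.
  f_equal; now apply sig_ext.
Qed.

Section Arrows.
Context {E : Cat} (X : Functor R E).

Definition fib_map_arrow {i i' : FibObj S s}
  (w : dA (Lk_diag (precomp phi X) s) i i') :
  dA (Lk_diag X (Fobj phi s)) (phi_plus i) (phi_plus i').
Proof.
  exists (Fmor phi (proj1_sig w)); destruct w as [w [pw Hw]]; split.
  - exact (proj1 hphi _ _ w pw).
  - cbn; now rewrite Hw, F_comp.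
Defined.

Lemma fib_map_full (i i' : FibObj S s)
  (e : dA (Lk_diag X (Fobj phi s)) (phi_plus i) (phi_plus i')) :
  exists w, fib_map_arrow w = e.
Proof.
  destruct i as [s1 [v1 [p1 n1]]], i' as [s2 [v2 [p2 n2]]], e as [f [pf Hf]]; cbn in *.
  assert (Hsq : comp (idm (Fobj phi s)) (Fmor phi v1) = comp (Fmor phi v2) f)
    by now rewrite comp_idl.
  destruct (proj2 Hpb (mkPlusObj p1 n1 hs) (mkPlusObj p2 n2 hs) f (idm _) (idm s)
              pf (is_iso_idm _) Hsq (is_iso_idm _) (eq_sym (F_id phi s)))
    as [[w t] [[pw [_ [Hc [Hw [_ Ht]]]]] _]]; cbn in *; subst t.
  rewrite comp_idl in Hc.
  exists (exist _ w (conj pw Hc)); now apply sig_ext.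
Qed.
End Arrows.
End FibreBijection.

Lemma incl_pullback (R : PreReedy) (hR : is_GReedy R) (n k : nat) :
  pullback_cond (incl_functor R n) k.
Proof.
  split.
  - intros [s0 r0 u pu nu du] b Hb Hr; cbn in *; subst r0.
    assert (hle : deg s0 <= n).
    { destruct hR as [_ [_ [_ [_ [hdeg _]]]]].
      pose proof (hdeg _ _ u pu nu); pose proof (proj2_sig b); cbn in *; lia. }
    assert (nu' : ~ @is_iso (LeN R n) (exist _ s0 hle) b u)
      by exact (fun Hi => nu (is_iso_Fmor (incl_functor R n) Hi)).
    exists (@mkPlusObj (LeN R n) k (exist _ s0 hle) b u pu nu' Hb).
    split; [now split|].
    intros [[s1 hs1] c1 v1 pv1 nv1 dv1] [Hc Hv]; cbn in *; subst c1.
    destruct (arrow_eq_dom Hv); apply inj_pair2 in Hv; subst v1.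
    apply plus_obj_ext; cbn.
    now rewrite (proof_irrelevance _ hs1 hle).
  - intros x y f g g0 pf ig Hsq ig0 Hg; cbn in *; subst g.
    exists (f, g0); split; [now repeat split|].
    intros [f' g0'] [_ [_ [_ [Hf [_ Hg0]]]]]; cbn in *; now subst.
Qed.

Lemma dom_pullback (R : PreReedy) (hR : is_GReedy R) (n k : nat) :
  pullback_cond (dom_functor R n) k.
Proof.
  split.
  - intros [s0 r0 u pu nu du] b Hb Hr; cbn in *; subst r0.
    destruct (plus_noniso_comp hR (pplus b) (@pniso _ _ b) pu nu) as [pc nc].
    pose (c := mkPlusObj pc nc (pdeg b)).
    pose (w := exist _ u eq_refl : @Hom (PlusN R n) c b).
    assert (nw : ~ is_iso w)
      by exact (fun Hi => nu (is_iso_Fmor (dom_functor R n) Hi)).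
    exists (@mkPlusObj (PlusN R n) k c b w I nw Hb).
    split; [now split|]; subst w c.
    intros [dx cx [v Hv] px nx dgx] [Hc Hx]; cbn in *; subst cx.
    apply plus_obj_ext; cbn; clear px nx dgx.
    assert (Hd : dx = mkPlusObj pc nc (pdeg b)).
    { apply plus_obj_ext; cbn.
      destruct dx as [s1 r1 u1 p1 n1 d1]; cbn in *.
      destruct (arrow_eq_dom Hx); apply inj_pair2 in Hx; subst v.
      assert (r1 = pcod b) as -> by exact (f_equal (@projT1 _ _) Hv).
      apply inj_pair2 in Hv; now subst u1. }
    subst dx; apply inj_pair2 in Hx; subst v.
    f_equal; now apply sig_ext.
  - intros [dx cx [wx Hx] px nx dgx] [dy cy [wy Hy] py ny dgy] f g [g0 Hg0]
      pf ig Hsq ig0 Hg; cbn in *; subst g.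
    assert (Ef : existT (fun c => Hom (pdom dx) c) (pcod dx) (parr dx)
               = existT (fun c => Hom (pdom dx) c) (pcod dy) (comp (parr dy) f)).
    { rewrite Hx, (cod_arrow_eq_comp wx Hg0), (cod_arrow_eq_comp f Hy).
      now rewrite <- !comp_assoc, Hsq. }
    exists (exist _ f Ef, exist _ g0 Hg0); split.
    + cbn; repeat split; auto; now apply sig_ext.
    + intros [f' g0'] [_ [_ [_ [Hf [_ Hg0']]]]]; cbn in *; subst g0'.
      f_equal; now apply sig_ext.
Qed.

Theorem lemma4p4 :
  (forall (E : Cat) (S R : PreReedy) (hS : is_GReedy S) (hR : is_GReedy R)
          (phi : Functor S R) (hphi : is_GMor phi) (k : nat),
     pullback_cond phi k ->
     forall (X : Functor R E) (s : S), deg s = k ->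
     forall (LS : E) (lamS : forall i, Hom (dD (Lk_diag (precomp phi X) s) i) LS)
            (LR : E) (lamR : forall i, Hom (dD (Lk_diag X (Fobj phi s)) i) LR),
       is_colimit (Lk_diag (precomp phi X) s) LS lamS ->
       is_colimit (Lk_diag X (Fobj phi s)) LR lamR ->
       forall m : Hom LS LR,
         (forall i, comp m (lamS i) = lamR (fib_map hS hR hphi i)) ->
         is_iso m)
  /\ (forall R : PreReedy, is_GReedy R ->
        forall n k : nat, pullback_cond (dom_functor R n) k)
  /\ (forall R : PreReedy, is_GReedy R ->
        forall n k : nat, pullback_cond (incl_functor R n) k).
Proof.
  split; [|split; [exact dom_pullback | exact incl_pullback]].
  intros E S R hS hR phi hphi k Hpb X s hs LS lamS LR lamR HS HR m Hm.
  exact (colimit_reindex_iso (D := Lk_diag X (Fobj phi s)) (F := fib_map hS hR hphi (s:=s))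
           (fib_map_injective Hpb hs) (fib_map_surjective Hpb hs) (fib_map_full Hpb hs X)
           HS HR Hm).
Qed.
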